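(* Let $\mathcal{A}$ be a cost automaton over a finite alphabet $\Sigma$ and let $L \subseteq \Sigma^*$ be a regular language. The winning condition for player B in the limitedness game with bound $\infty$ (for $\mathcal{A}$ and $L$) is an $\omega$-regular language, i.e. it is recognised by a nondeterministic Büchi automaton.
   Context: A cost automaton is a nondeterministic finite automaton (finite input alphabet, finite set of states, set of initial states, set of final states, finite set of transitions, each transition reading one input letter) additionally equipped with a finite totally ordered set of counters $0,\ldots,n$. For each counter $c$ there is a distinguished subset of transitions that increment $c$ and a distinguished subset of transitions that reset $c$; every transition that resets or increments counter $c$ must also reset all counters $0,\ldots,c-1$. A (finite or infinite) run is a consistent sequence of transitions (the target of each transition equals the source of the next) whose first transition starts in an initial state; a finite run is accepting if it ends in a final state. For sets of transitions $\delta_1,\delta_2,\ldots$, a run in $\delta_1\cdots\delta_i$ (resp. in $\delta_1\delta_2\cdots$) is a run whose $j$-th transition belongs to $\delta_j$ for every $j$. The limitedness game with bound $\infty$ is the following Gale-Stewart game (two players alternate for $\omega$ rounds, player A choosing a letter of his alphabet and then player B a letter of hers, producing an infinite word $a_1\delta_1a_2\delta_2\cdots$; player B wins iff this word lies in the winning condition). Player A's alphabet is $\Sigma$. Player B's alphabet is the set of all sets $\delta$ of transitions of $\mathcal{A}$ such that all transitions in $\delta$ read the same letter $a$ (formally, the union over $a\in\Sigma$ of the sets of sets of transitions reading $a$). The winning condition for player B is the set of sequences $a_1\delta_1a_2\delta_2\cdots$ such that for every $i$: (1) every transition in $\delta_i$ reads the letter $a_i$; (2') for every infinite run in $\delta_1\delta_2\cdots$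 and every counter $c$, if the run increments $c$ infinitely often then it resets $c$ infinitely often; (3) if $a_1\cdots a_i\in L$ then some run in $\delta_1\cdots\delta_i$ is accepting. *)

From mathcomp Require Import all_boot.
Set Implicit Arguments. Unset Strict Implicit. Unset Printing Implicit Defensive.

Record cost_aut (Sigma : finType) := CostAut {
  cstate : finType;
  ctrans : finType;
  csrc : ctrans -> cstate;
  clbl : ctrans -> Sigma;
  ctgt : ctrans -> cstate;
  cinit : {set cstate};
  cfinal : {set cstate};
  ncnt : nat;
  cincr : 'I_(ncnt.+1) -> {set ctrans};
  creset : 'I_(ncnt.+1) -> {set ctrans};
  cwf : forall (c c' : 'I_(ncnt.+1)) (t : ctrans),
      (t \in cincr c) || (t \in creset c) -> (c' < c)%N -> t \in creset c'
}.

Record dfa (Sigma : finType) := Dfa {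
  dstate : finType;
  dinit : dstate;
  dstep : dstate -> Sigma -> dstate;
  dfinal : {set dstate}
}.

Definition dfa_accepts (Sigma : finType) (D : dfa Sigma) (w : seq Sigma) : bool :=
  foldl (@dstep _ D) (@dinit _ D) w \in @dfinal _ D.

Definition regular (Sigma : finType) (L : seq Sigma -> Prop) : Prop :=
  exists D : dfa Sigma, forall w, L w <-> dfa_accepts D w.

Record buchi (Gamma : finType) := Buchi {
  bstate : finType;
  binit : {set bstate};
  bdelta : bstate -> Gamma -> bstate -> bool;
  bacc : {set bstate}
}.

Definition infinitely_often (P : nat -> Prop) : Prop :=
  forall N, exists j, (N <= j)%N /\ P j.

Definition buchi_accepts (Gamma : finType) (B : buchi Gamma) (w : nat -> Gamma) : Prop :=
  exists rho : nat -> bstate B,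
    rho 0 \in binit B /\
    (forall i, bdelta (rho i) (w i) (rho i.+1)) /\
    infinitely_often (fun i => rho i \in bacc B).

Section Game.
Variables (Sigma : finType) (A : cost_aut Sigma).

Definition Balph : finType :=
  {d : {set ctrans A} | [exists a : Sigma, [forall t in d, clbl t == a]]}.

(* Alphabet of the played words a_1 d_1 a_2 d_2 ... *)
Definition game_alph : finType := (Sigma + Balph)%type.

(* r is an infinite run in d_1 d_2 ... (0-indexed here) *)
Definition inf_run_in (d : nat -> Balph) (r : nat -> ctrans A) : Prop :=
  csrc (r 0) \in cinit A /\
  (forall j, ctgt (r j) = csrc (r j.+1)) /\
  (forall j, r j \in val (d j)).

(* r restricted to positions 0..i is an accepting finite run in d_1 ... d_(i+1) *)
Definition acc_fin_run_in (d : nat -> Balph) (i : nat) (r : nat -> ctrans A) : Prop :=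
  csrc (r 0) \in cinit A /\
  (forall j, (j < i)%N -> ctgt (r j) = csrc (r j.+1)) /\
  (forall j, (j <= i)%N -> r j \in val (d j)) /\
  ctgt (r i) \in cfinal A.

Definition win_cond (L : seq Sigma -> Prop) (w : nat -> game_alph) : Prop :=
  exists (a : nat -> Sigma) (d : nat -> Balph),
    (forall i, w i.*2 = inl (a i) /\ w i.*2.+1 = inr (d i)) /\
    (* (1) *)
    (forall i t, t \in val (d i) -> clbl t = a i) /\
    (* (2') *)
    (forall r, inf_run_in d r -> forall c : 'I_(ncnt A).+1,
        infinitely_often (fun j => r j \in cincr c) ->
        infinitely_often (fun j => r j \in creset c)) /\
    (* (3) *)
    (forall i, L (mkseq a i.+1) -> exists r, acc_fin_run_in d i r).

End Game.

From mathcomp Require Import all_boot boolp.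
Set Implicit Arguments. Unset Strict Implicit. Unset Printing Implicit Defensive.

(* The profile of a finite walk of A records its source, its target, and the
   counters it increments and resets; a segment of the play is abstracted by
   the finite set of profiles of the walks it allows. By Ramsey's
   theorem every play splits at positions n_0 < n_1 < ... so that all segments
   [n_i, n_(i+1)) have the same profile set e, and then condition (2') holds iff
   every chain of profiles from e that starts at a state reachable at n_0 and
   increments a counter infinitely often also resets it infinitely often: a
   violating run cuts into such a chain, and such a chain is realised by segment
   walks that glue into a violating run. A Buchi automaton guesses e and the
   positions n_i, computes the profile sets of the prefix and of the current
   segment, checks (1), and (3) using a DFA for L, and accepts iff it meets
   infinitely many breakpoints. *)

Lemma io_sub (P Q : nat -> Prop) :
  (forall j, P j -> Q j) -> infinitely_often P -> infinitely_often Q.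
Proof. by move=> PQ ioP N; have [j [Nj /PQ Qj]] := ioP N; exists j. Qed.

Lemma not_io (P : nat -> Prop) :
  ~ infinitely_often P -> exists N, forall j, N <= j -> ~ P j.
Proof.
move=> nio; apply: contrapT => h; apply: nio => N; apply: contrapT => hN.
by apply: h; exists N => j Nj Pj; apply: hN; exists j.
Qed.

Lemma io_pigeonhole (C : finType) (P : nat -> Prop) (f : nat -> C) :
  infinitely_often P -> exists c, infinitely_often (fun j => P j /\ f j = c).
Proof.
move=> ioP; apply: contrapT => /forallNP nio.
have [N hN] := choice (fun c => not_io (nio c)).
have [j [hj Pj]] := ioP (\max_c N c).
exact: (hN (f j) j (leq_trans (leq_bigmax (f j)) hj)).
Qed.

Section Enumeration.
Variables (p : pred nat) (iop : infinitely_often p).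

Lemma io_next m : exists k, (m < k) && p k.
Proof. by have [k [mk pk]] := iop m.+1; exists k; rewrite mk. Qed.

Definition next_in m := ex_minn (io_next m).

Lemma next_inP m :
  [/\ m < next_in m, p (next_in m) & forall k, m < k < next_in m -> ~~ p k].
Proof.
rewrite /next_in; case: ex_minnP => k /andP[mk pk] kmin; split=> // j /andP[mj jk].
by apply: contraTN jk => pj; rewrite -leqNgt kmin // mj.
Qed.

(* The i-th element of p in increasing order, skipping 0. *)
Definition enum_io i := iter i.+1 next_in 0.

Lemma enum_io0 : 0 < enum_io 0 /\ forall k, 0 < k < enum_io 0 -> ~~ p k.
Proof. by have [] := next_inP 0. Qed.

Lemma enum_ioP i :
  [/\ p (enum_io i), enum_io i < enum_io i.+1 &
      forall k, enum_io i < k < enum_io i.+1 -> ~~ p k].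
Proof.
have [_ p_i _] := next_inP (iter i next_in 0).
by have [lt_i _ gap_i] := next_inP (enum_io i).
Qed.

End Enumeration.

Section Ramsey.
Variables (C : finType) (col : nat -> nat -> C).

Lemma ramsey_step (S : pred nat) : infinitely_often S ->
  exists x c, S x /\ infinitely_often (fun j => [&& S j, x < j & col x j == c]).
Proof.
move=> ioS; have [x [_ Sx]] := ioS 0; exists x.
have ioS' : infinitely_often (fun j => S j /\ x < j).
  by move=> N; have [j [+ Sj]] := ioS (maxn N x.+1); rewrite geq_max => /andP[]; exists j.
have [c ioc] := io_pigeonhole (col x) ioS'; exists c; split=> //.
by apply: io_sub ioc => j [[-> ->] ->]; rewrite eqxx.
Qed.

Section Iteration.
Variable next : pred nat -> nat * C * pred nat.
Hypothesis nextP : forall S : pred nat, infinitely_often S ->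
  [/\ S (next S).1.1, infinitely_often (next S).2 &
      forall j, (next S).2 j -> [&& S j, (next S).1.1 < j & col (next S).1.1 j == (next S).1.2]].

Let S k := iter k (fun S => (next S).2) predT.
Let x k := (next (S k)).1.1.
Let c k := (next (S k)).1.2.

Let io_S k : infinitely_often (S k).
Proof. by elim: k => [N|k /nextP[]//]; exists N. Qed.

Let S_sub k m j : S (k + m) j -> S k j.
Proof.
elim: m j => [|m IH] j; first by rewrite addn0.
rewrite addnS /= => Sj; have [_ _ /(_ j Sj) /and3P[/IH]] := nextP (io_S (k + m)).
by [].
Qed.

Lemma ramsey_iter k m : k < m -> x k < x m /\ col (x k) (x m) = c k.
Proof.
move=> km; have Sxm : S k.+1 (x m).
  apply: (@S_sub k.+1 (m - k.+1)); rewrite subnKC //.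
  by have [] := nextP (io_S m).
by have [_ _ /(_ _ Sxm) /and3P[_ -> /eqP ->]] := nextP (io_S k).
Qed.

Lemma ramsey_of_choice :
  exists (n : nat -> nat) e, (forall i, n i < n i.+1) /\
    forall i j, i < j -> col (n i) (n j) = e.
Proof.
have ioT : infinitely_often (fun _ => True) by move=> N; exists N.
have [e ioe] := io_pigeonhole c ioT.
have ioce : infinitely_often (fun k => c k == e) by apply: io_sub ioe => k [_ ->].
pose g := enum_io ioce.
have g_incr : {homo g : i j / i < j}.
  by apply: homo_ltn ltn_trans _ => i; have [] := enum_ioP ioce i.
exists (fun i => x (g i)), e; split=> [i|i j /g_incr/ramsey_iter[_ ->]].
  by have [] := ramsey_iter (g_incr i i.+1 (ltnSn i)).
by have [/eqP] := enum_ioP ioce i.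
Qed.

End Iteration.

Theorem ramsey : exists (n : nat -> nat) e, (forall i, n i < n i.+1) /\
  forall i j, i < j -> col (n i) (n j) = e.
Proof.
have /choice[next nextP] : forall S : pred nat, exists t : nat * C * pred nat,
    infinitely_often S -> [/\ S t.1.1, infinitely_often t.2 &
      forall j, t.2 j -> [&& S j, t.1.1 < j & col t.1.1 j == t.1.2]].
  move=> S; case: (pselect (infinitely_often S)) => [|nioS].
    by move=> /ramsey_step[x [c [Sx ioS]]]; exists (x, c, fun j => [&& S j, x < j & col x j == c]).
  by exists (0, col 0 0, S).
exact: ramsey_of_choice nextP.
Qed.

End Ramsey.

Section Segments.
Variables (n : nat -> nat) (n_incr : forall i, n i < n i.+1).

Lemma incr_leq : {mono n : i j / i <= j}.
Proof. exact/leq_mono/(homo_ltn ltn_trans n_incr). Qed.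

Lemma incr_ltn : {mono n : i j / i < j}.
Proof. exact: leqW_mono incr_leq. Qed.

Lemma leq_incr i : i <= n i.
Proof. by elim: i => // i IH; exact: leq_ltn_trans IH (n_incr i). Qed.

Lemma seg_ex k : exists i, k < n i.+1.
Proof. by exists k; exact: leq_incr k.+1. Qed.

Definition seg_of k := ex_minn (seg_ex k).

Lemma seg_ofP k : n 0 <= k -> n (seg_of k) <= k < n (seg_of k).+1.
Proof.
rewrite /seg_of; case: ex_minnP => -[|i] kn imin n0k; rewrite kn andbT // leqNgt.
by apply/negP => /imin; rewrite ltnn.
Qed.

Lemma seg_of_eq i k : n i <= k < n i.+1 -> seg_of k = i.
Proof.
move=> /andP[nik kni]; have n0i : n 0 <= n i by rewrite incr_leq.
have /andP[nsk ksn] := seg_ofP (leq_trans n0i nik).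
have ls : n i < n (seg_of k).+1 := leq_ltn_trans nik ksn.
have sl : n (seg_of k) < n i.+1 := leq_ltn_trans nsk kni.
by apply/eqP; rewrite eqn_leq -ltnS -incr_ltn sl -ltnS -incr_ltn ls.
Qed.

Lemma io_segments (P : nat -> Prop) :
  infinitely_often P <-> infinitely_often (fun i => exists2 j, n i <= j < n i.+1 & P j).
Proof.
split=> ioP N.
  have [j [Nj Pj]] := ioP (n N); have n0N : n 0 <= n N by rewrite incr_leq.
  have /andP[sj js] := seg_ofP (leq_trans n0N Nj).
  exists (seg_of j); split; last by exists j; rewrite ?sj.
  by rewrite -ltnS -incr_ltn (leq_ltn_trans Nj js).
have [i [Ni [j /andP[ij ji] Pj]]] := ioP N.
by exists j; split=> //; apply: leq_trans ij; exact: leq_trans (leq_incr i).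
Qed.

Definition glue T (f : nat -> nat -> T) k := f (seg_of k) k.

Lemma glue_seg T (f : nat -> nat -> T) i k : n i <= k < n i.+1 -> glue f k = f i k.
Proof. by move=> /seg_of_eq; rewrite /glue => ->. Qed.

End Segments.

Lemma bigcup_natP (T : finType) (F : nat -> {set T}) b e x :
  reflect (exists2 k, b <= k < e & x \in F k) (x \in \bigcup_(b <= k < e) F k).
Proof.
have -> : (x \in \bigcup_(b <= k < e) F k) = has (fun k => x \in F k) (index_iota b e).
  by elim: (index_iota b e) => [|k s IH]; rewrite ?big_nil ?big_cons ?inE // IH.
by apply: (iffP hasP) => -[k]; rewrite ?mem_index_iota; exists k; rewrite ?mem_index_iota.
Qed.

Section Profiles.
Variables (Sigma : finType) (A : cost_aut Sigma).
Local Notation Q := (cstate A).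
Local Notation TR := (ctrans A).
Local Notation CN := ('I_(ncnt A).+1).

(* (p, q, I, R): a walk from p to q incrementing the counters in I and resetting those in R. *)
Definition profile : finType := (Q * Q * {set CN} * {set CN})%type.

Definition counters_of (S : CN -> {set TR}) (t : TR) : {set CN} := [set c | t \in S c].

Definition profile_rcons (x : profile) (t : TR) : profile :=
  (x.1.1.1, ctgt t, x.1.2 :|: counters_of (@cincr _ A) t, x.2 :|: counters_of (@creset _ A) t).

Definition id_profiles : {set profile} := [set (p, p, set0, set0) | p : Q].

Definition step_profiles (P : {set profile}) (d : {set TR}) : {set profile} :=
  [set profile_rcons x t | x in P, t in d & x.1.1.2 == csrc t].

Variable dv : nat -> {set TR}.

Fixpoint profiles b e : {set profile} :=
  if e is e'.+1 then
    if b <= e' then step_profiles (profiles b e') (dv e') else id_profiles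
  else id_profiles.

Lemma profiles_id b : profiles b b = id_profiles.
Proof. by case: b => //= b; rewrite ltnn. Qed.

Lemma profilesS b e : b <= e -> profiles b e.+1 = step_profiles (profiles b e) (dv e).
Proof. by move=> /= ->. Qed.

Definition walk_at (s : nat -> Q) (r : nat -> TR) k :=
  [/\ r k \in dv k, csrc (r k) = s k & ctgt (r k) = s k.+1].

Definition walk b e s r := forall k, b <= k < e -> walk_at s r k.

Definition walk_profile (s : nat -> Q) (r : nat -> TR) b e : profile :=
  (s b, s e, \bigcup_(b <= k < e) counters_of (@cincr _ A) (r k),
             \bigcup_(b <= k < e) counters_of (@creset _ A) (r k)).

Lemma walk_profile_nil s r b : walk_profile s r b b = (s b, s b, set0, set0).
Proof. by rewrite /walk_profile !big_geq. Qed.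

Lemma eq_walk_profile s s' r r' b e :
  (forall k, b <= k <= e -> s k = s' k) -> (forall k, b <= k < e -> r k = r' k) ->
  b <= e -> walk_profile s r b e = walk_profile s' r' b e.
Proof.
move=> ss' rr' be; rewrite /walk_profile ?ss' ?leqnn ?be //.
by congr (_, _, _, _); apply: eq_big_nat => k /rr' ->.
Qed.

Lemma walk_profileS s r b e : b <= e -> walk b e.+1 s r ->
  walk_profile s r b e.+1 = profile_rcons (walk_profile s r b e) (r e).
Proof.
move=> be w; have /w[_ _ tgt_e] : b <= e < e.+1 by rewrite be ltnSn.
by rewrite /walk_profile /profile_rcons /= tgt_e !big_nat_recr.
Qed.

Lemma walk_rcons s r b e t : b <= e -> walk b e s r -> t \in dv e -> csrc t = s e ->
  let s' k := if k <= e then s k else ctgt t in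
  let r' k := if k < e then r k else t in
  walk b e.+1 s' r' /\ walk_profile s' r' b e.+1 = profile_rcons (walk_profile s r b e) t.
Proof.
move=> be w td ts s' r'.
have w' : walk b e.+1 s' r'.
  move=> k /andP[bk]; rewrite ltnS leq_eqVlt => /orP[/eqP-> | ke].
    by rewrite /walk_at /s' /r' ltnn leqnn.
  by have [] := w k; rewrite ?bk // /walk_at /s' /r' ke ltnW.
split=> //; rewrite walk_profileS // /r' ltnn; congr profile_rcons.
by apply: eq_walk_profile => // k /andP[_ ke]; rewrite /s' /r' ke // ltnW.
Qed.

Lemma walk_profile_in s r b e : b <= e -> walk b e s r -> walk_profile s r b e \in profiles b e.
Proof.
move=> /subnKC <-; elim: (e - b) => [|m IH] w.
  by rewrite addn0 profiles_id walk_profile_nil; apply/imsetP; exists (s b).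
have bm : b <= b + m < b + m.+1 by rewrite leq_addr addnS ltnSn.
have [r_in src_m _] := w _ bm.
rewrite addnS profilesS ?leq_addr // walk_profileS -?addnS ?leq_addr //; apply/imset2P.
exists (walk_profile s r b (b + m)) (r (b + m)) => //; last by rewrite inE r_in src_m eqxx.
by apply: IH => k /andP[bk km]; apply: w; rewrite bk addnS ltnW.
Qed.

Lemma profiles_walk b e x : b < e -> x \in profiles b e ->
  exists s r, walk b e s r /\ walk_profile s r b e = x.
Proof.
move=> /subnKC <-; elim: (e - b.+1) x => [|m IH] x;
  rewrite addSn profilesS ?leq_addr // => /imset2P[y t yP]; rewrite inE => /andP[td /eqP yt] ->.
  rewrite addn0 profiles_id in yP td yt *; case/imsetP: yP yt => p _ -> /= pt.
  have w0 : walk b b (fun _ => p) (fun _ => t).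
    by move=> k /andP[bk /(leq_ltn_trans bk)]; rewrite ltnn.
  have := walk_rcons (leqnn b) w0 td (esym pt); rewrite /= walk_profile_nil.
  by eexists _, _; eassumption.
rewrite -addSnnS in yP td yt *.
have [s [r [w ys]]] := IH _ yP; rewrite -ys in yt *.
have := walk_rcons (ltnW (leq_addr m b.+1)) w td (esym yt).
by eexists _, _; eassumption.
Qed.

Lemma glue_walk n (n_incr : forall i, n i < n i.+1) (s : nat -> nat -> Q) (r : nat -> nat -> TR) :
  n 0 = 0 -> (forall i, walk (n i) (n i.+1) (s i) (r i)) ->
  (forall i, s i (n i.+1) = s i.+1 (n i.+1)) ->
  forall k, walk_at (glue n_incr s) (glue n_incr r) k.
Proof.
move=> n0 w s_next k; have := @seg_ofP _ n_incr k; rewrite n0 => /(_ isT).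
set i := seg_of n_incr k => iki; have [rk sk tk] := w i k iki.
rewrite /walk_at !(glue_seg n_incr _ iki); split=> //; rewrite tk.
case/andP: iki => ik; rewrite leq_eqVlt => /orP[/eqP ki | ki].
  by rewrite (@glue_seg _ n_incr _ _ i.+1) ki ?leqnn ?n_incr.
by rewrite (@glue_seg _ n_incr _ _ i) // ki (leq_trans ik).
Qed.

Definition inf_run (r : nat -> TR) : Prop :=
  csrc (r 0) \in cinit A /\ (forall j, ctgt (r j) = csrc (r j.+1)) /\ (forall j, r j \in dv j).

Lemma inf_run_walk r : inf_run r -> forall b e, walk b e (fun k => csrc (r k)) r.
Proof. by move=> [_ [tgt_r r_in]] b e k _; split. Qed.

Lemma walk_inf_run s r : s 0 \in cinit A -> (forall k, walk_at s r k) -> inf_run r.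
Proof.
move=> s0 w; split; first by have [_ ->] := w 0.
split=> j; last by have [] := w j.
by have [_ _ ->] := w j; have [_ ->] := w j.+1.
Qed.

Lemma io_counters n (n_incr : forall i, n i < n i.+1) (S : CN -> {set TR}) r c :
  infinitely_often (fun j => r j \in S c) <->
  infinitely_often (fun i => c \in \bigcup_(n i <= j < n i.+1) counters_of S (r j)).
Proof.
apply: iff_trans (io_segments n_incr _) _.
split; apply: io_sub => i.
  by case=> j ij Sj; apply/bigcup_natP; exists j; rewrite ?inE.
by case/bigcup_natP=> j ij; rewrite inE; exists j.
Qed.

(* The abstraction of (2') on the runs that follow a prefix with profiles P by segments with
   profiles e: the i-th segment goes from q i to q i.+1, incrementing I i and resetting R i. *)
Definition chains_reset_after_inc (P e : {set profile}) : Prop :=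
  forall x (q : nat -> Q) (I R : nat -> {set CN}) (c : CN),
    x \in P -> x.1.1.1 \in cinit A -> q 0 = x.1.1.2 ->
    (forall i, (q i, q i.+1, I i, R i) \in e) ->
    infinitely_often (fun i => c \in I i) -> infinitely_often (fun i => c \in R i).

Definition reset_after_inc : Prop :=
  forall r, inf_run r -> forall c : CN,
    infinitely_often (fun j => r j \in cincr c) -> infinitely_often (fun j => r j \in creset c).

Definition ramsey_factorization n e : Prop :=
  [/\ 0 < n 0, forall i, n i < n i.+1, chains_reset_after_inc (profiles 0 (n 0)) e &
      forall i, profiles (n i) (n i.+1) = e].

Lemma factorization_reset_after_inc n e : ramsey_factorization n e -> reset_after_inc.
Proof.
move=> [n0 n_incr chains_e ne] r run c /(io_counters n_incr) ioI.
apply/(io_counters n_incr); have w := inf_run_walk run.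
pose s k := csrc (r k).
apply: (chains_e (walk_profile s r 0 (n 0)) (fun i => s (n i))) ioI => //.
- exact: walk_profile_in.
- by case: run.
- by move=> i; rewrite -(ne i); exact: walk_profile_in (ltnW (n_incr i)) (w _ _).
Qed.

Lemma chain_run n x (q : nat -> Q) (I R : nat -> {set CN}) :
  0 < n 0 -> (forall i, n i < n i.+1) ->
  x \in profiles 0 (n 0) -> x.1.1.1 \in cinit A -> q 0 = x.1.1.2 ->
  (forall i, (q i, q i.+1, I i, R i) \in profiles (n i) (n i.+1)) ->
  exists r, [/\ inf_run r,
    forall i, I i = \bigcup_(n i <= j < n i.+1) counters_of (@cincr _ A) (r j) &
    forall i, R i = \bigcup_(n i <= j < n i.+1) counters_of (@creset _ A) (r j)].
Proof.
move=> n0 n_incr xP x_init qx qe.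
have [s0 [r0 [w0 x0]]] := profiles_walk n0 xP.
have /choice[sr srP] : forall i, exists sr : (nat -> Q) * (nat -> TR),
    walk (n i) (n i.+1) sr.1 sr.2 /\
    walk_profile sr.1 sr.2 (n i) (n i.+1) = (q i, q i.+1, I i, R i).
  by move=> i; have [s [r [w sr]]] := profiles_walk (n_incr i) (qe i); exists (s, r).
pose m i := if i is i'.+1 then n i' else 0.
have m_incr : forall i, m i < m i.+1 by case.
pose s i := if i is i'.+1 then (sr i').1 else s0.
pose r i := if i is i'.+1 then (sr i').2 else r0.
have w : forall k, walk_at (glue m_incr s) (glue m_incr r) k.
  apply: glue_walk => // -[|i]; rewrite /s /r /m //=; try by case: (srP i).
    by case: (srP 0) => _ [-> _ _ _]; rewrite qx -x0.
  by case: (srP i) => _ [_ -> _ _]; case: (srP i.+1) => _ [-> _ _ _].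
have glue_sr i j : n i <= j < n i.+1 -> glue m_incr r j = (sr i).2 j.
  exact: (@glue_seg _ m_incr _ _ i.+1).
exists (glue m_incr r); split.
- apply: walk_inf_run w; rewrite (@glue_seg _ m_incr _ _ 0) ?n0 //=.
  by rewrite -x0 in x_init.
- by move=> i; case: (srP i) => _ [_ _ <- _]; apply: eq_big_nat => j /glue_sr ->.
- by move=> i; case: (srP i) => _ [_ _ _ <-]; apply: eq_big_nat => j /glue_sr ->.
Qed.

Lemma reset_after_inc_chains n e : reset_after_inc -> 0 < n 0 -> (forall i, n i < n i.+1) ->
  (forall i, profiles (n i) (n i.+1) = e) -> chains_reset_after_inc (profiles 0 (n 0)) e.
Proof.
move=> reset n0 n_incr ne x q I R c xP x_init qx qe ioI.
have [|r [run rI rR]] := chain_run n0 n_incr xP x_init qx (q := q) (I := I) (R := R).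
  by move=> i; rewrite ne.
rewrite (funext rI) in ioI; rewrite (funext rR).
by apply/(io_counters n_incr)/reset/(io_counters n_incr).
Qed.

Lemma reset_after_inc_factorization : reset_after_inc -> exists n e, ramsey_factorization n e.
Proof.
move=> reset; have [m [e [m_incr me]]] := ramsey profiles.
have n_incr i : m i.+1 < m i.+2 := m_incr i.+1.
have m1 : 0 < m 1 := leq_ltn_trans (leq0n _) (m_incr 0).
exists (fun i => m i.+1), e; split=> // [|i]; last exact: me.
by apply: (@reset_after_inc_chains (fun i => m i.+1)) => // i; exact: me.
Qed.

End Profiles.

Section SegmentRuns.
Variables (Sigma : finType) (A : cost_aut Sigma) (dv : nat -> {set ctrans A}) (e : {set profile A}).

(* T is the profile set of the segment since the last breakpoint (None before the first one)
   and f' marks a breakpoint, where that segment must have profile set e; at the first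
   breakpoint the prefix, with profile set P', is checked instead. *)
Definition segment_step (P' : {set profile A}) (d : {set ctrans A}) (T T' : option {set profile A})
    (f' : bool) : Prop :=
  if f' then
    T' = Some (id_profiles A) /\
    (if T is Some T0 then step_profiles T0 d = e else chains_reset_after_inc P' e)
  else T' = omap (fun T0 => step_profiles T0 d) T.

Definition segment_run (T : nat -> option {set profile A}) (f : nat -> bool) : Prop :=
  T 0 = None /\ forall k, segment_step (profiles dv 0 k.+1) (dv k) (T k) (T k.+1) (f k.+1).

Section SegmentRunFactorization.
Variables (T : nat -> option {set profile A}) (f : nat -> bool).
Hypotheses (runTf : segment_run T f) (io_f : infinitely_often f).

Let n := enum_io io_f.
Let n_incr i : n i < n i.+1. Proof. by have [] := enum_ioP io_f i. Qed.
Let f_n i : f (n i). Proof. by have [] := enum_ioP io_f i. Qed.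
Let f_gap i k : n i < k < n i.+1 -> ~~ f k. Proof. by have [_ _] := enum_ioP io_f i; apply. Qed.
Let f_gap0 k : 0 < k < n 0 -> ~~ f k. Proof. by have [_] := enum_io0 io_f; apply. Qed.
Let n_pos i : 0 < n i.
Proof.
have n0 : 0 < n 0 by have [] := enum_io0 io_f.
by apply: leq_trans n0 _; rewrite (incr_leq n_incr).
Qed.

Let segment_step_at k : segment_step (profiles dv 0 k.+1) (dv k) (T k) (T k.+1) (f k.+1).
Proof. by case: runTf. Qed.

Lemma segment_run_before k : k < n 0 -> T k = None.
Proof.
elim: k => [|k IH] kn; first by case: runTf.
have := segment_step_at k; rewrite (negbTE (f_gap0 _)) ?kn //.
by rewrite IH // ltnW.
Qed.

Lemma segment_run_breakpoint i : T (n i) = Some (id_profiles A) /\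
  (if T (n i).-1 is Some T0 then step_profiles T0 (dv (n i).-1) = e
   else chains_reset_after_inc (profiles dv 0 (n i)) e).
Proof. by have := segment_step_at (n i).-1; rewrite prednK // f_n. Qed.

Lemma segment_run_inside i m : n i + m < n i.+1 -> T (n i + m) = Some (profiles dv (n i) (n i + m)).
Proof.
elim: m => [|m IH] lt; first by rewrite addn0 profiles_id; case: (segment_run_breakpoint i).
have f_off : f (n i + m.+1) = false.
  by apply/negbTE/(@f_gap i); rewrite lt andbT addnS ltnS leq_addr.
have := segment_step_at (n i + m); rewrite -addnS f_off IH; last first.
  by apply: leq_trans lt; rewrite addnS.
by rewrite addnS (@profilesS _ _ _ (n i)) ?leq_addr // /segment_step => ->.
Qed.

Lemma segment_run_chains : chains_reset_after_inc (profiles dv 0 (n 0)) e.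
Proof. by have [_] := segment_run_breakpoint 0; rewrite segment_run_before // ltn_predL. Qed.

Lemma segment_run_end i : profiles dv (n i) (n i.+1) = e.
Proof.
have ni : n i <= (n i.+1).-1 by rewrite -ltnS prednK.
have [_] := segment_run_breakpoint i.+1; rewrite -(subnKC ni) segment_run_inside; last first.
  by rewrite subnKC // ltn_predL.
by rewrite subnKC // -profilesS // prednK.
Qed.

Lemma segment_run_factorization : exists n, ramsey_factorization dv n e.
Proof.
by exists n; split;
  [exact: n_pos | exact: n_incr | exact: segment_run_chains | exact: segment_run_end].
Qed.

End SegmentRunFactorization.
Section FactorizationSegmentRun.
Variable n : nat -> nat.
Hypothesis fact_n : ramsey_factorization dv n e.

Let n_incr i : n i < n i.+1. Proof. by case: fact_n. Qed.

Let T k := if k < n 0 then None else Some (profiles dv (n (seg_of n_incr k)) k).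
Let f k := (n 0 <= k) && (n (seg_of n_incr k) == k).

Let seg_T_f i k : n i <= k < n i.+1 -> T k = Some (profiles dv (n i) k) /\ f k = (n i == k).
Proof.
move=> iki; have n0k : n 0 <= k by apply: leq_trans (proj1 (andP iki)); rewrite (incr_leq n_incr).
by rewrite /T /f (seg_of_eq n_incr iki) ltnNge n0k.
Qed.

Let segment_step_T_f k : segment_step (profiles dv 0 k.+1) (dv k) (T k) (T k.+1) (f k.+1).
Proof.
case: fact_n => n0 _ chains_e ne.
case: (ltngtP k.+1 (n 0)) => [lt0 | gt0 | eq0].
- by rewrite /segment_step /f /T leqNgt lt0 (ltnW lt0).
- have /andP[ik ki] := seg_ofP n_incr gt0; set i := seg_of n_incr k in ik ki.
  have /seg_T_f[Tk _] : n i <= k < n i.+1 by rewrite ik.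
  rewrite /segment_step Tk; move: ki; rewrite leq_eqVlt => /orP[/eqP ki | ki].
    have /seg_T_f[-> ->] : n i.+1 <= k.+1 < n i.+2 by rewrite ki leqnn n_incr.
    by rewrite ki eqxx profiles_id -(ne i) -ki profilesS.
  have /seg_T_f[-> ->] : n i <= k.+1 < n i.+1 by rewrite ki (leq_trans ik).
  by rewrite ltn_eqF ?ltnS // profilesS.
- have /seg_T_f[-> ->] : n 0 <= k.+1 < n 1 by rewrite eq0 leqnn n_incr.
  by rewrite eq0 eqxx profiles_id /T -eq0 ltnSn /segment_step eq0.
Qed.

Lemma factorization_segment_run : exists T f, segment_run T f /\ infinitely_often f.
Proof.
exists T, f; split; first split=> //; first by case: fact_n => n0 _ _ _; rewrite /T n0.
move=> N; exists (n N); split; first exact: leq_incr.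
by have /seg_T_f[_ ->] : n N <= n N < n N.+1 by rewrite leqnn n_incr.
Qed.

End FactorizationSegmentRun.
End SegmentRuns.

Section Interleave.
Variables (X Y : finType) (B : buchi (X * Y)%type).

(* The option holds the letter of X read since the last letter of Y. *)
Definition interleave_state : finType := (bstate B * option X)%type.

Definition interleave_buchi : buchi (X + Y)%type :=
  @Buchi _ interleave_state
    [set z | (z.1 \in binit B) && (z.2 == None)]
    (fun z l z' => match l, z.2 with
                   | inl x, None => z' == (z.1, Some x)
                   | inr y, Some x => bdelta z.1 (x, y) z'.1 && (z'.2 == None)
                   | _, _ => false
                   end)
    [set z | (z.1 \in bacc B) && (z.2 == None)].

Section InterleavedRun.
Variables (w : nat -> X + Y) (rho : nat -> interleave_state).
Hypothesis rho_step : forall j, @bdelta _ interleave_buchi (rho j) (w j) (rho j.+1).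

Lemma interleave_round j : (rho j).2 = None -> exists xy : X * Y,
  [/\ w j = inl xy.1, w j.+1 = inr xy.2, (rho j.+1).2 = Some xy.1,
      bdelta (rho j).1 xy (rho j.+2).1 & (rho j.+2).2 = None].
Proof.
move=> rj; have := rho_step j.+1; have := rho_step j; rewrite /= rj.
case: (w j) => [x|//] /eqP -> /=; case: (w j.+1) => [//|y] /andP[xy /eqP r2].
by exists (x, y).
Qed.

Lemma interleave_even k : (rho 0).2 = None -> (rho k.*2).2 = None.
Proof.
move=> r0; elim: k => [//|k IH]; rewrite doubleS.
by have [xy [_ _ _ _ ->]] := interleave_round IH.
Qed.

End InterleavedRun.

Lemma interleave_buchiP (w : nat -> X + Y) :
  buchi_accepts interleave_buchi w <->
  exists x y, (forall i, w i.*2 = inl (x i) /\ w i.*2.+1 = inr (y i)) /\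
    buchi_accepts B (fun i => (x i, y i)).
Proof.
split=> [[rho [r0 [rs racc]]] | [x [y [wxy [rho [r0 [rs racc]]]]]]].
  move: r0; rewrite inE => /andP[r0 /eqP r0n].
  have /choice[xy xyP] k := interleave_round rs (interleave_even rs k r0n).
  exists (fun k => (xy k).1), (fun k => (xy k).2); split=> [k|].
    by have [] := xyP k.
  exists (fun k => (rho k.*2).1); split=> //; split=> [k|N].
    by have [_ _ _] := xyP k; case: (xy k) => a b; rewrite doubleS => ? _.
  have [j [Nj]] := racc N.*2; rewrite inE => /andP[accj /eqP rjn].
  exists j./2; split; first by rewrite -(doubleK N) half_leq.
  move: rjn accj; rewrite -[j in rho j](odd_double_half j).
  by case: (odd j) => /=; [have [_ _ -> _] := xyP j./2 | rewrite add0n].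
pose sigma j : interleave_state := (rho j./2, if odd j then Some (x j./2) else None).
have sigma_even k : sigma k.*2 = (rho k, None) by rewrite /sigma odd_double doubleK.
have sigma_odd k : sigma k.*2.+1 = (rho k, Some (x k)).
  by rewrite /sigma /= odd_double uphalf_double.
exists sigma; split; first by rewrite inE /sigma /= r0.
split=> [j|N].
  rewrite -(odd_double_half j); case: (odd j); have [wx wy] := wxy j./2.
    by rewrite add1n -doubleS sigma_even sigma_odd /= wy rs.
  by rewrite add0n sigma_even sigma_odd /= wx.
have [k [Nk acck]] := racc N; exists k.*2; split.
  by rewrite -addnn (leq_trans Nk) ?leq_addr.
by rewrite sigma_even inE acck.
Qed.

End Interleave.

Section RoundAutomaton.
Variables (Sigma : finType) (A : cost_aut Sigma) (D : dfa Sigma).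

Definition has_accepting_profile (P : {set profile A}) : bool :=
  [exists x in P, (x.1.1.1 \in cinit A) && (x.1.1.2 \in cfinal A)].

(* DFA state, profiles of the prefix, guessed e, current segment, breakpoint flag. *)
Definition round_state : finType :=
  (dstate D * {set profile A} * {set profile A} * option {set profile A} * bool)%type.

Definition round_step (z : round_state) (ad : Sigma * Balph A) (z' : round_state) : Prop :=
  let: (q, P, e, T, _) := z in
  let: (q', P', e', T', f') := z' in
  [/\ forall t, t \in val ad.2 -> clbl t = ad.1,
      (q', P', e') = (dstep q ad.1, step_profiles P (val ad.2), e),
      q' \in dfinal D -> has_accepting_profile P' &
      segment_step e P' (val ad.2) T T' f'].

Definition round_buchi : buchi (Sigma * Balph A)%type :=
  @Buchi _ round_state
    [set z | [&& z.1.1.1.1 == dinit D, z.1.1.1.2 == id_profiles A & z.1.2 == None]]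
    (fun z ad z' => `[< round_step z ad z' >])
    [set z | z.2].

Lemma round_buchiP (a : nat -> Sigma) (d : nat -> Balph A) :
  let dv k := val (d k) in
  buchi_accepts round_buchi (fun i => (a i, d i)) <->
  [/\ forall i t, t \in val (d i) -> clbl t = a i,
      forall i, dfa_accepts D (mkseq a i.+1) -> has_accepting_profile (profiles dv 0 i.+1) &
      exists n e, ramsey_factorization dv n e].
Proof.
move=> dv; split=> [[rho [r0 [rs racc]]] | [lab fin [n [e fact]]]].
  set e := (rho 0).1.1.2; pose T k := (rho k).1.2; pose f k := (rho k).2.
  have rhoE k : rho k = (foldl (@dstep _ D) (dinit D) (mkseq a k), profiles dv 0 k, e, T k, f k).
    elim: k => [|k IH].
      move: r0; rewrite inE /T /f /e /= => /and3P[/eqP <- /eqP <- _].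
      by case: (rho 0) => [[[[? ?] ?] ?] ?].
    have := asboolW (rs k); rewrite IH /T /f.
    case: (rho k.+1) => [[[[q' P'] e'] T'] f'] [_ [-> -> ->] _ _].
    by rewrite mkseqS foldl_rcons profilesS.
  have step k : round_step (rho k) (a k, d k) (rho k.+1) := asboolW (rs k).
  split=> [i t|i|].
  - by have := step i; rewrite !rhoE => -[+ _ _ _]; apply.
  - by have := step i; rewrite !rhoE => -[_ _ + _]; apply.
  have [||m fact] := @segment_run_factorization _ _ dv e T f; last by exists m, e.
    split=> [|k]; first by move: r0; rewrite inE => /and3P[_ _ /eqP].
    by have := step k; rewrite !rhoE => -[].
  by apply: io_sub racc => j; rewrite inE.
have [T [f [[T0 Tstep] iof]]] := factorization_segment_run fact.
exists (fun k => (foldl (@dstep _ D) (dinit D) (mkseq a k), profiles dv 0 k, e, T k, f k)).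
split; first by rewrite inE /= T0 !eqxx.
split=> [k|N]; last by have [j [Nj fj]] := iof N; exists j; rewrite inE.
apply/asboolP; split; [exact: lab | | exact: fin | exact: Tstep].
by rewrite mkseqS foldl_rcons profilesS.
Qed.

End RoundAutomaton.

Lemma acc_fin_run_inP (Sigma : finType) (A : cost_aut Sigma) (d : nat -> Balph A) i :
  (exists r, acc_fin_run_in d i r) <-> has_accepting_profile (profiles (fun k => val (d k)) 0 i.+1).
Proof.
split=> [[r [r0 [rc [rin rf]]]] | /existsP[x /and3P[xP x_init x_fin]]].
  pose s k := if k <= i then csrc (r k) else ctgt (r i).
  have w : walk (fun k => val (d k)) 0 i.+1 s r.
    move=> k /andP[_]; rewrite ltnS => ki; rewrite /walk_at /s ki; split=> //; first exact: rin.
    by move: ki; rewrite leq_eqVlt => /orP[/eqP-> | ki]; rewrite ?ltnn // ki rc.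
  apply/existsP; exists (walk_profile s r 0 i.+1).
  by rewrite walk_profile_in //= /s leq0n ltnn r0.
have [s [r [w x_eq]]] := profiles_walk (ltn0Sn i) xP; rewrite -x_eq /= in x_init x_fin.
have wi j : j <= i -> walk_at (fun k => val (d k)) s r j by move=> ji; apply: w.
exists r; split; first by have [_ ->] := wi 0 (leq0n i).
split; first by move=> j ji; have [_ _ ->] := wi j (ltnW ji); have [_ ->] := wi j.+1 ji.
by split=> [j /wi[]|]; last by have [_ _ ->] := wi i (leqnn i).
Qed.

Theorem lemma3p1 (Sigma : finType) (A : cost_aut Sigma) (L : seq Sigma -> Prop) :
  regular L ->
  exists B : buchi (game_alph A),
    forall w : nat -> game_alph A, @win_cond Sigma A L w <-> buchi_accepts B w.
Proof.
move=> [D HD]; exists (interleave_buchi (round_buchi A D)) => w.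
apply: iff_trans (iff_sym (interleave_buchiP _ w)); split.
  move=> [a [d [wad [lab [reset fin]]]]]; exists a, d; split=> //.
  apply/round_buchiP; split=> // [i /HD /fin /acc_fin_run_inP //|].
  exact: reset_after_inc_factorization.
move=> [a [d [wad /round_buchiP[lab fin [n [e fact]]]]]]; exists a, d.
do 3 split=> //; first exact: factorization_reset_after_inc fact.
by move=> i /HD /fin /acc_fin_run_inP.
Qed.
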